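(* Let $r\geq 1$, let $\mathbb R^r$ be endowed with the supremum norm $\|\cdot\|_\infty$, and let $|K|$ denote the Lebesgue measure of a Borel set $K\subset\mathbb R^r$. Let $J_r$ be the $r\times r$ matrix with $1$'s on the diagonal and on the superdiagonal and $0$'s elsewhere. Then there exist positive constants $C,C'$ (depending on $r$) such that for every $n\geq 2$, $$Cn^{-r(r-1)/2}\leq\bigl|\{x\in\mathbb R^r: \|J_r^kx\|_\infty\leq 1\text{ for }0\leq k<n\}\bigr|\leq C'n^{-r(r-1)/2}.$$ *)

From HB Require Import structures.
From mathcomp Require Import all_boot all_order all_algebra.
From mathcomp Require Import all_classical all_reals all_analysis.
Set Implicit Arguments. Unset Strict Implicit. Unset Printing Implicit Defensive.
Import Order.TTheory GRing.Theory Num.Theory.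
Import numFieldNormedType.Exports.
Local Open Scope classical_set_scope.
Local Open Scope ring_scope.

(* r-dimensional Lebesgue measure of a set K of points of R^r (points are
   r-tuples of reals), defined as the iterated product of the 1-dimensional
   Lebesgue measure: exactly the library's product-measure construction
   (m1 \x m2)(A) = \int[m1]_x m2 (xsection A x), iterated r times. *)
Fixpoint lebesgue_vol (R : realType) (r : nat) : set (r.-tuple R) -> \bar R :=
  match r return set (r.-tuple R) -> \bar R with
  | 0 => fun K => ((\1_K : 0.-tuple R -> R) [tuple])%:E
  | r'.+1 => fun K =>
      (\int[@lebesgue_measure R]_x
         lebesgue_vol [set t : r'.-tuple R | K [tuple of x :: t]])%E
  end.

Definition col_of_tuple (R : realType) (r : nat) (t : r.-tuple R) : 'cV[R]_r :=
  \col_i tnth t i.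

Definition Jmat (R : realType) (r : nat) : 'M[R]_r :=
  \matrix_(i, j) (if (val j == val i) || (val j == (val i).+1) then 1 else 0).

Definition Jpow_app (R : realType) (r k : nat) (x : 'cV[R]_r) : 'cV[R]_r :=
  iter k (fun y => Jmat R r *m y) x.

(* {x in R^r : ||J_r^k x||_oo <= 1 for 0 <= k < n}; `|.| on matrices is the
   sup norm mx_norm. *)
Definition orbit_box (R : realType) (r n : nat) : set (r.-tuple R) :=
  [set t | forall k, (k < n)%N -> `|Jpow_app k (col_of_tuple t)| <= 1].

From HB Require Import structures.
From mathcomp Require Import all_boot all_order all_algebra.
From mathcomp Require Import all_classical all_reals all_analysis.
From mathcomp Require Import ring lra zify.
Set Implicit Arguments. Unset Strict Implicit. Unset Printing Implicit Defensive.
Import Order.TTheory GRing.Theory Num.Theory.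
Local Open Scope ring_scope.
Local Open Scope classical_set_scope.

(* Pad x with zeros to a sequence (x_0, ..., x_{r-1}, 0, 0, ...); then J acts
   as f_i |-> f_i + f_{i+1}, so (J^k x)_i = sum_j C(k, j) x_{i+j}.
   If |x_j| <= n^-j / e for all j, then |J^k x|_oo <= (1 + 1/n)^k / e <= 1 for
   k < n: this box of volume ~ n^-(r(r-1)/2) lies in the orbit box.
   Conversely, let h ~ n/r. The s-fold difference (J^h - 1)^s x is an
   alternating sum of 2^s vectors J^(ih) x with ih < n, so it has sup norm at
   most 2^s; its 0-th coordinate is h^s x_s up to an error controlled by the
   h^j |x_j| with j > s. A downward induction on s gives h^j |x_j| = O(1), i.e.
   |x_j| = O(n^-j), so the orbit box lies in a box of the same order of
   volume. *)

Lemma bin_leq_expn n m : ('C(n, m) <= n ^ m)%N.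
Proof.
apply: leq_trans (_ : 'C(n, m) * m`! <= _)%N; first by rewrite leq_pmulr ?fact_gt0.
rewrite bin_ffact ffact_prod.
apply: leq_trans (_ : \prod_(i < m) n <= _)%N.
  by apply: leq_prod => i _; apply: leq_subr.
by rewrite prod_nat_const card_ord.
Qed.

Section SequenceShift.
Variable R : realFieldType.
Implicit Types (f g : nat -> R) (h r : nat).

Definition jshift f : nat -> R := fun i => f i + f i.+1.

Lemma iter_jshift k f i :
  iter k jshift f i = \sum_(j < k.+1) 'C(k, j)%:R * f (i + j)%N.
Proof.
elim: k f i => [|k IH] f i.
  by rewrite big_ord_recl big_ord0 addr0 bin0 mul1r addn0.
rewrite /= /jshift !IH [in RHS]big_ord_recl /=.
under [in RHS]eq_bigr do rewrite /bump leq0n add1n binS natrD mulrDl.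
rewrite big_split /= [in LHS]big_ord_recl /= addrA; congr (_ + _).
  by rewrite !bin0 big_ord_recr /= bin_small // mul0r addr0.
by apply: eq_bigr => j _; rewrite addSnnS.
Qed.

Lemma norm_iter_jshift_le (q c : R) f : 0 <= q -> 0 <= c ->
  (forall i, `|f i| <= c * q ^+ i) ->
  forall k i, `|iter k jshift f i| <= c * q ^+ i * (1 + q) ^+ k.
Proof.
move=> q0 c0 Hf; elim=> [|k IH] i; first by rewrite expr0 mulr1.
apply: le_trans (ler_normD _ _) _; apply: le_trans (lerD (IH i) (IH i.+1)) _.
by rewrite !exprS le_eqVlt; apply/orP; left; apply/eqP; ring.
Qed.

Definition vanish_from r f := forall j, (r <= j)%N -> f j = 0.

Lemma sum_nat_le_vanish r g : (forall q, 0 <= g q) -> vanish_from r g ->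
  forall a b, \sum_(a <= q < b) g q <= \sum_(a <= q < r) g q.
Proof.
move=> g0 gr a b.
rewrite (big_nat_widen _ _ _ _ _ (leq_maxl b r)).
rewrite [X in _ <= X](big_nat_widen _ _ _ _ _ (leq_maxr b r)).
rewrite big_mkcond [X in _ <= X]big_mkcond /=.
by apply: ler_sum_nat => q _; have [qr|/gr->] := ltnP q r; case: ifP.
Qed.

Definition jdiff h f : nat -> R := fun p => iter h jshift f p - f p.

Lemma jdiffE h f p :
  jdiff h f p = \sum_(j < h) 'C(h, j.+1)%:R * f (p + j.+1)%N.
Proof.
rewrite /jdiff iter_jshift big_ord_recl bin0 mul1r addn0 addrAC subrr add0r.
by apply: eq_bigr => j _; rewrite /bump ?leq0n ?add1n.
Qed.

Lemma jdiff_vanish h r f : vanish_from r f -> vanish_from r (jdiff h f).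
Proof.
move=> fr p rp; rewrite jdiffE big1 // => j _.
by rewrite fr ?mulr0 // (leq_trans rp (leq_addr _ _)).
Qed.

Lemma iter_jdiffB h s f g :
  iter s (jdiff h) (f \- g) = iter s (jdiff h) f \- iter s (jdiff h) g.
Proof.
elim: s f g => [|s IH] f g //=; rewrite IH; apply: funext => i.
by rewrite /= !jdiffE -sumrB; apply: eq_bigr => j _; rewrite mulrBr.
Qed.

End SequenceShift.

Arguments jshift {R} f.
Arguments jdiff {R} h f.

Section WeightedTail.
Variables (R : realFieldType) (r : nat).
Implicit Types (f : nat -> R) (h : nat).

Definition wtail h q f : R := \sum_(q <= j < r) h%:R ^+ j * `|f j|.

Lemma wtail_ge0 h q f : 0 <= wtail h q f.
Proof. by apply: sumr_ge0 => j _; rewrite mulr_ge0 ?exprn_ge0. Qed.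

Lemma wtail_le h a b f : (a <= b)%N -> wtail h b f <= wtail h a f.
Proof.
move=> ab; have [br|rb] := leqP b r.
  rewrite /wtail (big_cat_nat ab br) /= lerDr.
  by apply: sumr_ge0 => j _; rewrite mulr_ge0 ?exprn_ge0.
by rewrite /wtail big_geq ?wtail_ge0 // ltnW.
Qed.

Lemma wtail_recl h q f : (q < r)%N ->
  wtail h q f = h%:R ^+ q * `|f q| + wtail h q.+1 f.
Proof. by move=> qr; rewrite /wtail big_ltn. Qed.

Lemma binomial_window_le_wtail h f d L p : vanish_from r f ->
  h%:R ^+ p * `|\sum_(j < L) 'C(h, (j + d)%N)%:R * f (p + d + j)%N|
    <= wtail h (p + d) f.
Proof.
move=> fr; set g := fun q => h%:R ^+ q * `|f q|.
have g0 q : 0 <= g q by rewrite mulr_ge0 ?exprn_ge0.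
have gr : vanish_from r g by move=> q /fr fq0; rewrite /g fq0 normr0 mulr0.
apply: le_trans (sum_nat_le_vanish g0 gr (p + d) (p + d + L)).
have -> : \sum_((p + d)%N <= q < p + d + L) g q = \sum_(j < L) g (p + d + j)%N.
  rewrite -{1}(add0n (p + d)%N) big_addn addKn big_mkord.
  by apply: eq_bigr => j _; rewrite addnC.
apply: le_trans (ler_wpM2l (exprn_ge0 _ (ler0n _ _)) (ler_norm_sum _ _ _)) _.
rewrite mulr_sumr; apply: ler_sum => j _.
rewrite normrM mulrA /g (addnC j) ler_wpM2r ?normr_ge0 // ger0_norm ?ler0n //.
rewrite -addnA exprD ler_wpM2l ?exprn_ge0 ?ler0n // (addnC d j) -natrX ler_nat.
exact: bin_leq_expn.
Qed.

Lemma norm_jdiff_le h f p : vanish_from r f ->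
  h%:R ^+ p * `|jdiff h f p| <= wtail h p.+1 f.
Proof.
move=> fr; have := binomial_window_le_wtail h 1 h p fr; rewrite addn1 jdiffE.
suff -> : \sum_(j < h) 'C(h, j.+1)%:R * f (p + j.+1)%N =
          \sum_(j < h) 'C(h, (j + 1)%N)%:R * f (p.+1 + j)%N by [].
by apply: eq_bigr => j _; rewrite addn1 addSnnS.
Qed.

Lemma norm_jdiff_sub_le h f p : (0 < h)%N -> vanish_from r f ->
  h%:R ^+ p * `|jdiff h f p - h%:R * f p.+1| <= wtail h p.+2 f.
Proof.
case: h => [//|h'] _ fr.
have := binomial_window_le_wtail h'.+1 2 h' p fr.
rewrite addn2 jdiffE big_ord_recl /= bin1 addn1 addrAC subrr add0r.
suff -> : \sum_(i < h') 'C(h'.+1, (bump 0 i).+1)%:R * f (p + (bump 0 i).+1)%N =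
          \sum_(j < h') 'C(h'.+1, (j + 2)%N)%:R * f (p.+2 + j)%N by [].
by apply: eq_bigr => j _; rewrite /bump ?leq0n ?add1n addn2 !addnS !addSn.
Qed.

Lemma wtail_jdiff_le h q f : vanish_from r f ->
  wtail h q (jdiff h f) <= r%:R * wtail h q.+1 f.
Proof.
move=> fr; apply: le_trans (_ : \sum_(q <= p < r) wtail h q.+1 f <= _).
  apply: ler_sum_nat => p /andP[qp _].
  by apply: le_trans (norm_jdiff_le h p fr) (wtail_le h f _).
rewrite sumr_const_nat -[_ *+ _]mulr_natl ler_wpM2r ?wtail_ge0 // ler_nat.
exact: leq_subr.
Qed.

(* Each application of [jdiff h] multiplies by [h] and shifts left, up to an
   error controlled by the weighted tail beyond the current index. *)
Lemma norm_iter_jdiff_sub_le h s f p : (0 < h)%N -> vanish_from r f ->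
  `|h%:R ^+ p * iter s (jdiff h) f p - h%:R ^+ (p + s) * f (p + s)%N|
    <= r.+1%:R ^+ s * wtail h (p + s).+1 f.
Proof.
move=> h0; elim: s f => [|s IH] f fr.
  by rewrite addn0 subrr normr0 mulr_ge0 ?exprn_ge0 ?wtail_ge0.
rewrite iterSr.
set a := h%:R ^+ p * iter s (jdiff h) (jdiff h f) p.
set b := h%:R ^+ (p + s) * jdiff h f (p + s)%N.
set c := h%:R ^+ (p + s.+1) * f (p + s.+1)%N.
set w := wtail h (p + s.+1).+1 f.
have ab : `|a - b| <= r.+1%:R ^+ s * (r%:R * w).
  apply: le_trans (IH _ (jdiff_vanish h fr)) _.
  by rewrite ler_wpM2l ?exprn_ge0 // /w addnS; apply: wtail_jdiff_le.
have bc : `|b - c| <= w.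
  rewrite /b /c addnS exprS [h%:R * _]mulrC -mulrA -mulrBr normrM.
  by rewrite ger0_norm ?exprn_ge0 // /w addnS; apply: norm_jdiff_sub_le.
have w0 : 0 <= w := wtail_ge0 _ _ f.
have e1 : 1 <= r.+1%:R ^+ s :> R by rewrite exprn_ege1 // ler1n.
apply: le_trans (ler_distD b a c) _; apply: le_trans (lerD ab bc) _.
rewrite exprSr; set e := r.+1%:R ^+ s in e1 ab *.
have -> : r.+1%:R = r%:R + 1 :> R by rewrite -addn1 natrD.
have r0 : 0 <= r%:R :> R by [].
nra.
Qed.

End WeightedTail.

Section MarkovBound.
Variable R : realFieldType.
Implicit Types (x : nat -> R) (h n r : nat).

Definition orbit_bounded n x := forall k p, (k < n)%N -> `|iter k jshift x p| <= 1.

(* [iter s (jdiff h) (iter k jshift x)] is a signed sum of [2 ^ s] iterates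
   [iter (k + i * h) jshift x] with [i <= s]. *)
Lemma norm_iter_jdiff_le_exp h n x : orbit_bounded n x ->
  forall s k p, (k + s * h < n)%N -> `|iter s (jdiff h) (iter k jshift x) p| <= 2%:R ^+ s.
Proof.
move=> xn; elim=> [|s IH] k p skn; first by apply: xn; rewrite mul0n addn0 in skn.
rewrite iterSr.
have -> : jdiff h (iter k jshift x) = iter (h + k) jshift x \- iter k jshift x.
  by apply: funext => i; rewrite /jdiff iterD.
rewrite iter_jdiffB; apply: le_trans (ler_normB _ _) _.
rewrite mulSn in skn; rewrite exprS mulr2n mulrDl mul1r.
by apply: lerD; apply: IH; lia.
Qed.

Lemma scaled_coef_le_tail h n r x s : (0 < h)%N -> vanish_from r x ->
  orbit_bounded n x -> (s * h < n)%N ->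
  h%:R ^+ s * `|x s| <= 2%:R ^+ s + r.+1%:R ^+ s * wtail r h s.+1 x.
Proof.
move=> h0 xr xn shn.
have := norm_iter_jdiff_sub_le s 0 h0 xr; rewrite expr0 mul1r !add0n => close.
have := norm_iter_jdiff_le_exp (k:=0) xn 0 shn; rewrite /= => small.
rewrite -(ger0_norm (exprn_ge0 s (ler0n R h))) -normrM.
set u := iter s (jdiff h) x 0.
have := ler_normD u (h%:R ^+ s * x s - u); rewrite addrC subrK => /le_trans; apply.
by apply: lerD => //; rewrite distrC.
Qed.

Lemma scaled_coef_le_pow h r x (P Q : R) : 0 <= P -> 0 <= Q ->
  (forall s, (s < r)%N -> h%:R ^+ s * `|x s| <= P + Q * wtail r h s.+1 x) ->
  forall j, (j < r)%N -> h%:R ^+ j * `|x j| <= (P + Q + 1) ^+ r.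
Proof.
move=> P0 Q0 Hx; set B := P + Q + 1.
have B1 : 1 <= B by rewrite /B lerDr addr_ge0.
have tail t : (t <= r)%N -> wtail r h (r - t) x <= B ^+ t.
  elim: t => [|t IH] tr; first by rewrite subn0 /wtail big_geq.
  have tr' : (r - t.+1 < r)%N by lia.
  rewrite wtail_recl //; apply: le_trans (lerD (Hx _ tr') (lexx _)) _.
  have -> : ((r - t.+1).+1 = r - t)%N by lia.
  have IHt := IH (ltnW tr); have Bt1 : 1 <= B ^+ t by rewrite exprn_ege1.
  have W0 := wtail_ge0 r h (r - t) x.
  rewrite exprS /B; set Y := B ^+ t in IHt Bt1 *; set X := wtail r h (r - t) x in IHt W0 *.
  nra.
move=> j jr; apply: le_trans (_ : B ^+ (r - j) <= _); last first.
  by apply: ler_weXn2l => //; exact: leq_subr.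
have := tail (r - j)%N (leq_subr _ _); rewrite subKn ?(ltnW jr) // wtail_recl //.
by apply: le_trans; rewrite lerDl wtail_ge0.
Qed.

Definition markov_const r : R :=
  (2%:R ^+ r + r.+1%:R ^+ r + 1) ^+ r * (2 * r)%N%:R ^+ r.

Lemma markov_const_gt0 r : (0 < r)%N -> 0 < markov_const r.
Proof.
by move=> r0; rewrite /markov_const mulr_gt0 ?exprn_gt0 ?ltr0n ?muln_gt0 //.
Qed.

Lemma markov_coef_bound n r x j : (0 < n)%N -> vanish_from r x ->
  orbit_bounded n x -> (j < r)%N -> `|x j| * n%:R ^+ j <= markov_const r.
Proof.
move=> n0 xr xn jr; have r0 : (0 < r)%N by apply: leq_ltn_trans jr.
set B : R := 2%:R ^+ r + r.+1%:R ^+ r + 1.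
have Br1 : 1 <= B ^+ r by rewrite exprn_ege1 // lerDr addr_ge0 ?exprn_ge0.
have [nr|rn] := ltnP n.-1 r.
  have xj1 : `|x j| <= 1 by have := xn 0%N j n0.
  have nj : n%:R ^+ j <= (2 * r)%N%:R ^+ r :> R.
    apply: le_trans (_ : (2 * r)%N%:R ^+ j <= _).
      by apply: lerXn2r; rewrite ?nnegrE ?ler0n // ler_nat; lia.
    by apply: ler_weXn2l; [rewrite ler1n muln_gt0 | exact: ltnW].
  by apply: ler_pM; rewrite ?exprn_ge0 //; apply: le_trans xj1 Br1.
set h := (n.-1 %/ r)%N.
have h0 : (0 < h)%N by rewrite divn_gt0.
have hx s : (s < r)%N ->
    h%:R ^+ s * `|x s| <= 2%:R ^+ r + r.+1%:R ^+ r * wtail r h s.+1 x.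
  move=> sr; have shn : (s * h < n)%N.
    have := leq_divM n.-1 r; rewrite -/h; nia.
  apply: le_trans (scaled_coef_le_tail h0 xr xn shn) _.
  apply: lerD; first by apply: ler_weXn2l; [rewrite ler1n | exact: ltnW].
  by rewrite ler_wpM2r ?wtail_ge0 //; apply: ler_weXn2l; [rewrite ler1n | exact: ltnW].
have hxj := scaled_coef_le_pow (exprn_ge0 _ (ler0n _ _)) (exprn_ge0 _ (ler0n _ _)) hx jr.
have n2rh : (n <= 2 * r * h)%N.
  have := ltn_ceil n.-1 r0; rewrite -/h => nl.
  have : (r <= h * r)%N by rewrite leq_pmull.
  nia.
apply: le_trans (_ : `|x j| * ((2 * r)%N%:R ^+ j * h%:R ^+ j) <= _).
  rewrite ler_wpM2l // -exprMn -natrM.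
  by apply: lerXn2r; rewrite ?nnegrE ?ler0n // ler_nat.
rewrite mulrCA mulrC /markov_const; apply: ler_pM; rewrite ?mulr_ge0 ?exprn_ge0 //.
  by rewrite mulrC.
by apply: ler_weXn2l; [rewrite ler1n muln_gt0 | exact: ltnW].
Qed.

End MarkovBound.

Section ColumnAsSequence.
Variables (R : realType) (r : nat).
Implicit Types (v : 'cV[R]_r).

Definition seq_of_col v : nat -> R :=
  fun i => if insub i is Some k then v k 0 else 0.

Lemma seq_of_col_ord v (k : 'I_r) : seq_of_col v k = v k 0.
Proof. by rewrite /seq_of_col valK. Qed.

Lemma seq_of_col_vanish v : vanish_from r (seq_of_col v).
Proof. by move=> i ri; rewrite /seq_of_col insubF // ltnNge ri. Qed.

Lemma sum_seq_of_col v a :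
  \sum_(j < r) (if val j == a then v j 0 else 0) = seq_of_col v a.
Proof.
have [ar|ra] := ltnP a r; last first.
  rewrite seq_of_col_vanish // big1 // => j _.
  by case: eqP => // ja; move: (ltn_ord j); rewrite ja ltnNge ra.
rewrite -[a]/(val (Ordinal ar)) seq_of_col_ord (bigD1 (Ordinal ar)) //= eqxx.
rewrite big1 ?addr0 // => j jne; case: eqP => // ja.
by move: jne; rewrite -val_eqE /= => /negP[]; apply/eqP.
Qed.

Lemma seq_of_col_mulJ v : seq_of_col (Jmat R r *m v) = jshift (seq_of_col v).
Proof.
apply: funext => i; rewrite /jshift.
have [ir|ri] := ltnP i r; last by rewrite !seq_of_col_vanish ?addr0 // leqW.
rewrite -[i]/(val (Ordinal ir)) seq_of_col_ord mxE -!sum_seq_of_col -big_split /=.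
apply: eq_bigr => j _; rewrite mxE /=.
have [->|_] := eqVneq (val j) i; first by rewrite /= (ltn_eqF (ltnSn i)) mul1r addr0.
by case: eqP; rewrite ?mul1r ?mul0r ?add0r.
Qed.

Lemma seq_of_col_Jpow k v : seq_of_col (Jpow_app k v) = iter k jshift (seq_of_col v).
Proof. by elim: k => [|k IH] //=; rewrite -IH -seq_of_col_mulJ. Qed.

Lemma norm_seq_of_col_le v (c : R) : `|v| <= c -> forall i, `|seq_of_col v i| <= c.
Proof.
move=> vc i; have [ir|ri] := ltnP i r; last first.
  by rewrite seq_of_col_vanish // normr0 (le_trans _ vc).
rewrite -[i]/(val (Ordinal ir)) seq_of_col_ord; apply: le_trans vc.
by rewrite [`|v|]mx_normrE; apply: (le_bigmax _ _ (Ordinal ir, 0)).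
Qed.

Lemma norm_col_le v (c : R) : 0 <= c ->
  (forall i, `|seq_of_col v i| <= c) -> `|v| <= c.
Proof.
move=> c0 vc; rewrite [`|v|]mx_normrE; apply: bigmax_le => // -[i j] _ /=.
by have := vc i; rewrite seq_of_col_ord (ord1 j).
Qed.

Lemma seq_of_col_tuple (t : r.-tuple R) i : seq_of_col (col_of_tuple t) i = nth 0 t i.
Proof.
have [ir|ri] := ltnP i r; last by rewrite seq_of_col_vanish // nth_default ?size_tuple.
by rewrite -[i]/(val (Ordinal ir)) seq_of_col_ord mxE (tnth_nth 0).
Qed.

End ColumnAsSequence.

Definition centered_box (R : realType) r (a : nat -> R) : set (r.-tuple R) :=
  [set t | forall i, (i < r)%N -> `|nth 0 t i| <= a i].
Arguments centered_box {R} r a.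

Section IteratedVolume.
Variable R : realType.
Local Open Scope ereal_scope.

(* No measurability is needed: the integral of a nonnegative function is a
   supremum over the simple functions below it. *)
Lemma ge0_le_integralT (f g : R -> \bar R) : (forall x, 0 <= f x) ->
  (forall x, f x <= g x) ->
  \int[@lebesgue_measure R]_x f x <= \int[@lebesgue_measure R]_x g x.
Proof.
move=> f0 fg; have g0 x : 0 <= g x by apply: le_trans (fg x).
rewrite !ge0_integralTE //; apply: ereal_sup_le => _ [s /= sf <-].
by exists s => //= x; apply: le_trans (fg x).
Qed.

Lemma lebesgue_vol_ge0 r (K : set (r.-tuple R)) : 0 <= lebesgue_vol K.
Proof.
elim: r K => [|r IH] K /=; first by rewrite lee_fin indicE; case: ([tuple] \in K).
by apply: integral_ge0 => x _; apply: IH.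
Qed.

Lemma le_lebesgue_vol r (K K' : set (r.-tuple R)) :
  K `<=` K' -> lebesgue_vol K <= lebesgue_vol K'.
Proof.
elim: r K K' => [|r IH] K K' KK' /=.
  rewrite lee_fin /indic; case: (boolP ([tuple] \in K)) => [/set_mem/KK' /mem_set ->|_] //.
apply: ge0_le_integralT => x; first exact: lebesgue_vol_ge0.
by apply: IH => t /= /KK'.
Qed.

Lemma lebesgue_vol0 r : lebesgue_vol (set0 : set (r.-tuple R)) = 0.
Proof.
elim: r => [|r IH] /=; first by rewrite indicE in_set0.
by rewrite (_ : (fun x => _) = cst 0) ?integral0 //; apply: funext => x; rewrite -IH.
Qed.

Lemma lebesgue_vol_box r (a : nat -> R) : (forall i, 0 <= a i)%R ->
  lebesgue_vol (centered_box r a) = (\prod_(i < r) (2 * a i))%:E.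
Proof.
elim: r a => [|r IH] a a0 /=.
  by rewrite big_ord0 indicE mem_set.
set P := (\prod_(i < r) (2 * a i.+1))%R.
have -> : (fun x => lebesgue_vol [set t : r.-tuple R | centered_box r.+1 a [tuple of x :: t]])
   = (fun x => (\1_(`[(- a 0%N)%R, a 0%N]%classic) x)%:E * P%:E).
  apply: funext => x; rewrite indicE; case: (boolP (x \in _)) => xa.
    rewrite mul1e -(IH (fun i => a i.+1)) //; congr lebesgue_vol.
    apply: funext => t /=; apply: propext; split=> [H i ir|H [|i] ir //=].
    - exact: (H i.+1).
    - by move: xa => /set_mem /=; rewrite in_itv /= -ler_norml.
    - exact: H.
  rewrite mul0e (_ : [set t | _] = set0) ?lebesgue_vol0 //.
  apply/seteqP; split=> t //= /(_ 0%N isT) /= xa'.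
  by move: xa => /negP; apply; rewrite inE /= in_itv /= -ler_norml.
rewrite (integralZr measurableT (integrable_indic_itv _ _ _ _)).
rewrite integral_indic //= setIT lebesgue_measure_itv /= lte_fin big_ord_recl.
case: ifPn => ha; first by rewrite -EFinD -EFinM opprK -mulr2n mulr_natl.
have -> : a 0%N = 0%R.
  apply/eqP; rewrite eq_le a0 andbT leNgt; apply: contra ha => h.
  by rewrite (@lt_trans _ _ 0%R) // oppr_lt0.
by rewrite mul0e mulr0 mul0r.
Qed.

End IteratedVolume.

Section OrbitBoxBetweenBoxes.
Variables (R : realType) (r n : nat).
Hypothesis n0 : (0 < n)%N.

Lemma orbit_box_sub_box :
  @orbit_box R r n `<=` centered_box r (fun j => markov_const R r * n%:R ^- j).
Proof.
move=> t tn j jr; set x := seq_of_col (col_of_tuple t).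
have xn : orbit_bounded n x.
  by move=> k p kn; rewrite -seq_of_col_Jpow; apply: norm_seq_of_col_le; apply: tn.
have := markov_coef_bound n0 (seq_of_col_vanish _) xn jr.
by rewrite seq_of_col_tuple -ler_pdivlMr ?exprn_gt0 ?ltr0n.
Qed.

Lemma box_sub_orbit_box :
  centered_box r (fun j => (expR 1)^-1 * n%:R ^- j) `<=` @orbit_box R r n.
Proof.
move=> t tbox k kn; set q : R := n%:R^-1; set c : R := (expR 1)^-1.
have q0 : 0 <= q by rewrite invr_ge0.
have c0 : 0 <= c by rewrite invr_ge0 ltW ?expR_gt0.
have tq i : `|seq_of_col (col_of_tuple t) i| <= c * q ^+ i.
  rewrite seq_of_col_tuple; have [ir|ri] := ltnP i r; first by rewrite exprVn tbox.
  by rewrite nth_default ?size_tuple // normr0 mulr_ge0 ?exprn_ge0.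
apply: norm_col_le => // p; rewrite seq_of_col_Jpow.
apply: le_trans (norm_iter_jshift_le q0 c0 tq k p) _.
have qp1 : q ^+ p <= 1 by rewrite exprn_ile1 // invf_le1 ?ler1n ?ltr0n.
have growth : (1 + q) ^+ k <= expR 1.
  apply: le_trans (_ : expR q ^+ k <= _).
    apply: lerXn2r; last exact: expR_ge1Dx.
      by rewrite nnegrE addr_ge0.
    by rewrite nnegrE ltW ?expR_gt0.
  rewrite -expRM_natl ler_expR /q ler_pdivrMr ?ltr0n // mul1r ler_nat.
  exact: ltnW.
apply: le_trans (_ : c * 1 * expR 1 <= 1); last by rewrite mulr1 mulVf ?gt_eqF ?expR_gt0.
by apply: ler_pM; rewrite ?mulr_ge0 ?exprn_ge0 ?addr_ge0 // ler_wpM2l.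
Qed.

End OrbitBoxBetweenBoxes.

Lemma prod_box_geometric (R : realType) (a N : R) r :
  \prod_(i < r) (2 * (a * N ^- i)) = (2 * a) ^+ r * N ^- (r * r.-1)./2.
Proof.
under eq_bigr do rewrite mulrA.
rewrite big_split /= prodr_const card_ord; congr (_ * _).
under eq_bigr do rewrite -exprVn.
rewrite prodrXr -exprVn; congr (_ ^+ _).
by rewrite -(big_mkord xpredT (fun i => i)) bin2_sum bin2.
Qed.

Theorem corollaryB3 (R : realType) (r : nat) (hr : (1 <= r)%N) :
  exists C C' : R, 0 < C /\ 0 < C' /\
    forall n : nat, (2 <= n)%N ->
      ((C * n%:R ^- (r * r.-1)./2)%:E <= lebesgue_vol (@orbit_box R r n))%E /\
      (lebesgue_vol (@orbit_box R r n) <= (C' * n%:R ^- (r * r.-1)./2)%:E)%E.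
Proof.
have A0 := markov_const_gt0 R hr.
exists ((2 * (expR 1)^-1) ^+ r), ((2 * markov_const R r) ^+ r).
split; first by rewrite exprn_gt0 // mulr_gt0 // invr_gt0 expR_gt0.
split; first by rewrite exprn_gt0 // mulr_gt0.
move=> n n2; have n0 : (0 < n)%N by apply: leq_trans n2.
split.
  apply: le_trans _ (le_lebesgue_vol (box_sub_orbit_box (R:=R) (r:=r) n0)).
  by rewrite lebesgue_vol_box ?prod_box_geometric // => i; rewrite mulr_ge0 ?exprn_ge0.
apply: le_trans (le_lebesgue_vol (orbit_box_sub_box (R:=R) (r:=r) n0)) _.
by rewrite lebesgue_vol_box ?prod_box_geometric // => i; rewrite mulr_ge0 ?exprn_ge0 ?(ltW A0).
Qed.
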